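(* Let $n\ge1$, $p$ a prime dividing $n$, $0\le t\le p-1$, and $q\in B\setminus B_t$. Put $Q:=B_t\cup\{q\}$. If $y\in\mathrm{Sm}(\prec_{deg},Q)\setminus\mathrm{Sm}(\prec_{deg},B_t)$, then $\deg y\ge\frac{n(p-1)}{p}$.
   Context: $\omega_1=e^{2\pi i/p}$, $\omega_j=\omega_1^j$; $B=\{1,\omega_1,\ldots,\omega_{p-1}\}^n\subseteq\mathbb{C}^n$, $B_t=\{(t_1,\ldots,t_n)\in B: t_1\cdots t_n=\omega_t\}$. $\prec_{deg}$ is the deglex order on monomials of $\mathbb{C}[x_1,\dots,x_n]$ (compare degrees first, ties broken lexicographically with $x_n\prec\cdots\prec x_1$). $\mathrm{Sm}(\prec,X)$ is the set of monomials that are not the $\prec$-leading monomial of any nonzero polynomial vanishing on $X$. *)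

From HB Require Import structures.
From mathcomp Require Import all_boot all_order all_algebra all_field.
Set Implicit Arguments. Unset Strict Implicit. Unset Printing Implicit Defensive.
Import Order.TTheory GRing.Theory Num.Theory.
Local Open Scope ring_scope.

(* omega_1 = e^{2 pi i / p}: the p-th root of -1 with minimal nonnegative
   argument is e^{i pi / p}; its square is e^{2 pi i / p}. *)
Definition omega (p : nat) : algC := (p.-root (-1)) ^+ 2.

Definition point (n : nat) := n.-tuple algC.
Definition mono (n : nat) := n.-tuple nat.

Definition mdeg n (m : mono n) : nat := (\sum_(i < n) tnth m i)%N.

(* lexicographic comparison, first coordinate most significant
   (x_n < ... < x_1) *)
Fixpoint lex_le (a b : seq nat) : bool :=
  match a, b with
  | [::], _ => true
  | _ :: _, [::] => false
  | x :: a', y :: b' => (x < y)%N || ((x == y) && lex_le a' b')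
  end.

Definition deglex_le n (m m' : mono n) : bool :=
  (mdeg m < mdeg m')%N || ((mdeg m == mdeg m') && lex_le m m').

Definition mono_eval n (m : mono n) (x : point n) : algC :=
  \prod_(i < n) tnth x i ^+ tnth m i.

(* A polynomial is given by a finite list s of monomials and a coefficient
   function c; it is sum_{m in s} c m * x^m (monomials outside s have
   coefficient 0; duplicates in s are ignored). *)
Definition peval n (s : seq (mono n)) (c : mono n -> algC) (x : point n) : algC :=
  \sum_(m <- undup s) c m * mono_eval m x.

Definition is_lead n (s : seq (mono n)) (c : mono n -> algC) (y : mono n) : Prop :=
  [/\ y \in s, c y != 0 & forall m, m \in s -> c m != 0 -> deglex_le m y].

Definition vanishes_on n (s : seq (mono n)) (c : mono n -> algC) (X : pred (point n)) :=
  forall x, X x -> peval s c x = 0.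

Definition Sm n (X : pred (point n)) (y : mono n) : Prop :=
  ~ exists (s : seq (mono n)) (c : mono n -> algC), vanishes_on s c X /\ is_lead s c y.

Definition inB n p (x : point n) : bool :=
  all (fun z => z \in [seq omega p ^+ j | j <- iota 0 p]) x.

Definition inBt n p t (x : point n) : bool :=
  inB p x && (\prod_(i < n) tnth x i == omega p ^+ t).

From HB Require Import structures.
From mathcomp Require Import all_boot all_order all_algebra all_field.
From mathcomp Require Import zify.
Set Implicit Arguments. Unset Strict Implicit. Unset Printing Implicit Defensive.
Import Order.TTheory GRing.Theory Num.Theory.

(* Let f vanish on B_t with deglex leading monomial y, deg y < n(p-1)/p; then
   every monomial of f has degree < n(p-1)/p.  For a point x = (w^a_j)_j of B,
   the weight [interp_weight a], a truncated Fourier expansion of the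
   indicator of x, satisfies sum_{e in B_t} W(e) e^m = |B_t| x^m for all such
   monomials m: by the character-sum orthogonality over the coset B_t only
   the exponent vector congruent to m survives, since a nonzero common shift
   of residues would push one of the two degrees past n(p-1)/p.  Hence f
   vanishes on all of B, in particular at q, and y is not standard for Q. *)

Lemma pred_le_shift_mod p c x : 0 < c < p -> x < p ->
  p.-1 <= c * x + (p - c) * ((x + c) %% p).
Proof.
move=> /andP[c_gt0 c_lt_p] x_lt_p.
have [xc_lt_p | p_le_xc] := ltnP (x + c) p; first by rewrite modn_small //; nia.
have -> : x + c = (x + c - p) + p by lia.
by rewrite modnDr modn_small; [nia | lia].
Qed.

(* If m j = r j + c (mod p) with 0 <= r j < p, then averaging
   c * r j + (p - c) * (m j mod p) >= p - 1 over j shows that r and m cannot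
   both have average below (p - 1) / p unless the shift c vanishes. *)
Lemma shift_residues_eq0 n p c (r m : 'I_n -> nat) :
  c < p -> (forall j, r j < p) -> (forall j, m j = r j + c %[mod p]) ->
  (\sum_j r j) * p < n * p.-1 -> (\sum_j m j) * p < n * p.-1 -> c = 0.
Proof.
move=> c_lt_p r_lt_p m_shift sum_r_lt sum_m_lt.
have [// | c_gt0] := posnP c; exfalso.
have sum_mod_le : \sum_j m j %% p <= \sum_j m j by apply: leq_sum => j _; exact: leq_mod.
have : n * p.-1 <= c * (\sum_j r j) + (p - c) * (\sum_j m j %% p).
  rewrite !big_distrr -big_split /= -[X in X * _]card_ord -sum_nat_const.
  apply: leq_sum => j _; rewrite m_shift.
  by apply: pred_le_shift_mod; rewrite ?c_gt0.
have sum_mod_lt : (\sum_j m j %% p) * p < n * p.-1.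
  by apply: leq_ltn_trans sum_m_lt; rewrite leq_mul2r sum_mod_le orbT.
move: sum_r_lt sum_mod_lt.
move: (\sum_j r j) (\sum_j m j %% p) (n * p.-1) => R M k R_lt M_lt k_le.
have [d def_p] : exists d, p = c + d by exists (p - c); lia.
subst p; rewrite addKn in k_le.
have : c * (R * (c + d)) < c * k by rewrite ltn_pmul2l.
have : d * (M * (c + d)) <= d * k by rewrite leq_mul2l (ltnW M_lt) orbT.
nia.
Qed.

Local Open Scope ring_scope.

Lemma omega_primitive p : prime p -> p.-primitive_root (omega p).
Proof.
move=> p_pr; have p_gt1 := prime_gt1 p_pr.
have zp : p.-root (-1 : algC) ^+ p = -1 by rewrite rootCK // prime_gt0.
have z_neq_N1 := rootC_lt0 (-1 : algC) p_gt1.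
rewrite /omega; move: (p.-root (-1 : algC)) zp z_neq_N1 => z zp z_neq_N1.
have z2p : (z ^+ 2) ^+ p = 1 by rewrite -exprM mulnC exprM zp sqrrN expr1n.
have z2_neq1 : z ^+ 2 != 1.
  (* z = -1 is excluded because [p.-root] is never negative *)
  rewrite -subr_eq0 subr_sqr_1 mulf_eq0 subr_eq0 addr_eq0; apply/norP; split.
    apply/eqP => z1; move/eqP: zp; rewrite z1 expr1n -subr_eq0 opprK -mulr2n.
    by rewrite pnatr_eq0.
  by apply/eqP => zN1; move: z_neq_N1; rewrite zN1 ltrN10.
have [m m_prim m_dvd_p] := prim_order_exists (prime_gt0 p_pr) z2p.
case/primeP: p_pr => _ /(_ m m_dvd_p) /orP[/eqP m1 | /eqP <- //].
by move: z2_neq1; rewrite -(prim_expr_order m_prim) m1 expr1 eqxx.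
Qed.

Section RootOfUnityPoints.
Variables (n p' : nat) (w : algC).
Hypothesis w_prim : p'.+1.-primitive_root w.
Local Notation p := p'.+1.
Local Notation exponent := {ffun 'I_n -> 'I_p}.

Definition wpoint (a : 'I_n -> nat) : point n := [tuple w ^+ a j | j < n].

Definition Bt_exp t (e : exponent) : bool := \prod_j w ^+ e j == w ^+ t.

Definition card_Bt t : nat := #|[pred e | Bt_exp t e]|.

Definition low_exp (r : exponent) : bool := ((\sum_j (r j : nat)) * p < n * p')%N.

Definition residues (m : mono n) : exponent := [ffun j => inZp (tnth m j)].

(* Since w ^+ p' = w^-1, this is the part of degree < n (p - 1) / p of the
   discrete Fourier expansion of the indicator function of [wpoint a]. *)
Definition interp_weight (a : 'I_n -> nat) (e : exponent) : algC :=
  \sum_(r | low_exp r) \prod_j w ^+ (a j * r j) * \prod_j (w ^+ e j) ^+ (p' * r j).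

Lemma expr_inZp k : w ^+ (inZp k : 'I_p) = w ^+ k.
Proof. exact: prim_expr_mod. Qed.

Lemma expr_Zp_add (x y : 'I_p) : w ^+ (x + y)%R = w ^+ x * w ^+ y.
Proof. by rewrite -exprD -[in RHS](prim_expr_mod w_prim). Qed.

Lemma sum_Bt_monomial_eq0 t (k : 'I_n -> nat) i l : w ^+ k i != w ^+ k l ->
  \sum_(e | Bt_exp t e) \prod_j (w ^+ e j) ^+ k j = 0.
Proof.
move=> neq_kil; have neq_il : i != l by apply: contraNneq neq_kil => ->.
pose d : exponent := [ffun j => if j == i then inZp 1 else if j == l then inZp p' else 0].
have prod_d (F : 'I_n -> algC -> algC) : (forall j, F j 1 = 1) ->
    \prod_j F j (w ^+ d j) = F i w * F l (w ^+ p').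
  move=> F1; rewrite (bigD1 i) // (bigD1 l) 1?eq_sym //= big1 => [|j /andP[jl ji]].
    by rewrite !ffunE eqxx eq_sym (negbTE neq_il) eqxx !expr_inZp mulr1.
  by rewrite ffunE (negbTE ji) (negbTE jl) F1.
have Bt_shift e : Bt_exp t (e + d) = Bt_exp t e.
  rewrite /Bt_exp; under eq_bigr do rewrite ffunE expr_Zp_add.
  by rewrite big_split /= (prod_d (fun _ z => z)) // -exprS prim_expr_order // mulr1.
(* translating by [d] multiplies the summand by w ^+ (k i - k l) != 1 *)
set S := (X in X = 0).
have S_shift : S = S * (w ^+ k i * (w ^+ p') ^+ k l).
  rewrite {1}/S (reindex_inj (addIr d)) /= (eq_bigl _ _ Bt_shift) big_distrl /=.
  apply: eq_bigr => e _; rewrite -(prod_d (fun j z => z ^+ k j)) => [|j]; last exact: expr1n.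
  rewrite -big_split /=; apply: eq_bigr => j _.
  by rewrite ffunE expr_Zp_add exprMn.
have factor_neq1 : w ^+ k i * (w ^+ p') ^+ k l != 1.
  apply: contra neq_kil => /eqP h; apply/eqP.
  have : w ^+ k i * ((w ^+ p') ^+ k l * w ^+ k l) = w ^+ k l by rewrite mulrA h mul1r.
  by rewrite -exprMn -exprSr (prim_expr_order w_prim) expr1n mulr1.
apply/eqP; move/eqP: S_shift; rewrite -subr_eq0 -{1}[S]mulr1 -mulrBr.
by rewrite mulf_eq0 subr_eq0 [1 == _]eq_sym (negbTE factor_neq1) orbF.
Qed.

Lemma residues_of_equal_powers (m : mono n) (r : exponent) : (0 < n)%N ->
  low_exp r -> (mdeg m * p < n * p')%N ->
  (forall i l, w ^+ (tnth m i + p' * r i) = w ^+ (tnth m l + p' * r l)) ->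
  r = residues m.
Proof.
move=> n_gt0 low_r low_m eq_pow; pose i0 := Ordinal n_gt0.
pose c := ((tnth m i0 + p' * r i0) %% p)%N.
have m_shift j : tnth m j = r j + c %[mod p].
  move/eqP: (eq_pow j i0); rewrite (eq_prim_root_expr w_prim) => /eqP eq_j.
  by rewrite /c -eq_j modnDmr addnCA -mulSn mulnC addnC modnMDl.
have c_eq0 : c = 0%N.
  by apply: (shift_residues_eq0 _ _ m_shift) => //; rewrite ltn_mod.
apply/ffunP => j; apply: val_inj.
by rewrite ffunE /= m_shift c_eq0 addn0 modn_small.
Qed.

Lemma sum_Bt_weight_monomial t a (m : mono n) : (0 < n)%N -> (mdeg m * p < n * p')%N ->
  \sum_(e | Bt_exp t e) interp_weight a e * mono_eval m (wpoint (fun j => e j)) =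
  (card_Bt t)%:R * mono_eval m (wpoint a).
Proof.
move=> n_gt0 low_m; pose k (r : exponent) j := (tnth m j + p' * r j)%N.
have expand e : interp_weight a e * mono_eval m (wpoint (fun j => e j)) =
    \sum_(r | low_exp r) \prod_j w ^+ (a j * r j) * \prod_j (w ^+ e j) ^+ k r j.
  rewrite /interp_weight big_distrl /=; apply: eq_bigr => r _.
  rewrite -mulrA /mono_eval -big_split /=.
  by congr (_ * _); apply: eq_bigr => j _; rewrite tnth_mktuple -exprD addnC.
rewrite (eq_bigr _ (fun e _ => expand e)) exchange_big /=.
under eq_bigr do rewrite -big_distrr /=.
have low_res : low_exp (residues m).
  apply: leq_ltn_trans low_m; rewrite leq_mul2r; apply/orP; right.
  by apply: leq_sum => j _; rewrite ffunE leq_mod.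
rewrite (bigD1 (residues m)) //= [X in _ + X]big1 ?addr0; last first.
  move=> r /andP[low_r r_neq].
  have [/forallP eq_pow | ] := boolP [forall i, [forall l, w ^+ k r i == w ^+ k r l]].
    case/eqP: r_neq; apply: residues_of_equal_powers => // i l.
    by apply/eqP; move/forallP: (eq_pow i) => /(_ l).
  rewrite negb_forall => /existsP[i]; rewrite negb_forall => /existsP[l neq].
  by rewrite (sum_Bt_monomial_eq0 t neq) mulr0.
have k_res j : w ^+ k (residues m) j = 1.
  rewrite -(prim_expr_mod w_prim) /k ffunE /= -modnDmr modnMmr modnDmr.
  by rewrite -mulSn modnMr.
rewrite mulrC; congr (_ * _).
  rewrite (eq_bigr (fun=> 1)) ?sumr_const // => e _.
  by apply: big1 => j _; rewrite -exprM mulnC exprM k_res expr1n.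
apply: eq_bigr => j _; rewrite tnth_mktuple ffunE /= -exprM.
by rewrite -(prim_expr_mod w_prim) modnMmr prim_expr_mod.
Qed.

Lemma low_degree_vanishing_on_Bt t (s : seq (mono n)) (c : mono n -> algC) a :
  (0 < n)%N -> (forall m, m \in s -> c m != 0 -> (mdeg m * p < n * p')%N) ->
  (forall e, Bt_exp t e -> peval s c (wpoint (fun j => e j)) = 0) ->
  peval s c (wpoint a) = 0.
Proof.
move=> n_gt0 low_s van; pose i0 := Ordinal n_gt0.
have card_neq0 : (card_Bt t)%:R != 0 :> algC.
  rewrite pnatr_eq0 -lt0n; apply/card_gt0P.
  exists [ffun j => if j == i0 then inZp t else 0].
  rewrite inE /Bt_exp (bigD1 i0) //= big1 ?mulr1 => [|j /negbTE j_neq]; last first.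
    by rewrite ffunE j_neq.
  by rewrite ffunE eqxx expr_inZp.
have : (card_Bt t)%:R * peval s c (wpoint a) =
    \sum_(e | Bt_exp t e) interp_weight a e * peval s c (wpoint (fun j => e j)).
  rewrite /peval big_distrr /=; under [RHS]eq_bigr do rewrite big_distrr /=.
  rewrite exchange_big /=; apply: eq_big_seq => m; rewrite mem_undup => m_s.
  have [-> | cm_neq0] := eqVneq (c m) 0.
    by rewrite mul0r mulr0 big1 // => e _; rewrite mul0r mulr0.
  rewrite mulrCA -(sum_Bt_weight_monomial t a n_gt0 (low_s m m_s cm_neq0)).
  by rewrite big_distrr /=; apply: eq_bigr => e _; rewrite mulrCA.
rewrite big1 => [/eqP | e /van ->]; last exact: mulr0.
by rewrite mulf_eq0 (negbTE card_neq0) => /eqP.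
Qed.

End RootOfUnityPoints.

Lemma inB_wpoint n p (q : point n) : inB p q -> exists a, q = wpoint (omega p) a.
Proof.
move/all_tnthP => q_B.
have [a qa] : exists a : 'I_n -> nat, forall j, tnth q j = omega p ^+ a j.
  apply: (@fin_all_exists _ (fun=> nat) (fun j k => tnth q j = omega p ^+ k)) => j.
  by have /mapP[k _ ->] := q_B j; exists k.
by exists a; apply: eq_from_tnth => j; rewrite tnth_mktuple.
Qed.

Lemma inBt_wpoint n p' t (e : {ffun 'I_n -> 'I_p'.+1}) :
  Bt_exp (omega p'.+1) t e -> inBt p'.+1 t (wpoint (omega p'.+1) (fun j => e j)).
Proof.
move=> e_Bt; apply/andP; split.
  apply/all_tnthP => j; rewrite tnth_mktuple; apply/mapP.
  by exists (e j : nat); rewrite // mem_iota add0n ltn_ord.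
by under eq_bigr do rewrite tnth_mktuple.
Qed.

Lemma deglex_le_mdeg n (m m' : mono n) : deglex_le m m' -> (mdeg m <= mdeg m')%N.
Proof. by case/orP => [/ltnW | /andP[/eqP -> _]]. Qed.

Theorem mainTheorem10 (n p t : nat) (q : point n) (y : mono n) :
  (1 <= n)%N -> prime p -> (p %| n)%N -> (t <= p - 1)%N ->
  inB p q -> ~~ inBt p t q ->
  Sm (fun x : point n => inBt p t x || (x == q)) y ->
  ~ Sm (fun x : point n => inBt p t x) y ->
  (n * (p - 1) <= mdeg y * p)%N.
Proof.
move=> n_gt0 p_pr _ _ q_B _ Sm_Q not_Sm_Bt.
rewrite leqNgt; apply/negP => deg_y_low.
apply: not_Sm_Bt => -[s [c [van lead]]].
apply: Sm_Q; exists s, c; split=> // x /orP[/van // | /eqP ->].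
have [a ->] := inB_wpoint q_B.
have [p' def_p] : exists p', p = p'.+1 by exists p.-1; rewrite prednK ?prime_gt0.
subst p; rewrite subn1 /= in deg_y_low.
have [_ _ y_lead] := lead.
apply: (low_degree_vanishing_on_Bt (omega_primitive p_pr) (t := t)) => // [m m_s cm_neq0 | e e_Bt].
  apply: leq_ltn_trans deg_y_low; rewrite leq_mul2r.
  by rewrite deglex_le_mdeg ?orbT ?y_lead.
exact: van (inBt_wpoint e_Bt).
Qed.
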